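(* A ring $R$ with identity is semisimple if and only if the free right $R$-module $R_R^{(\mathbb{N})}$ has the SSP.
   Context: Rings are associative with identity and modules are unitary. $R_R^{(\mathbb{N})}$ denotes the direct sum of countably many copies of $R_R$. A module $M$ has the summand sum property (SSP) if the sum of any two direct summands of $M$ is again a direct summand of $M$. *)

(* Right modules over a (possibly noncommutative) ring R,
   presented concretely: a module is a subset M of a carrier T equipped with
   zero, addition and a right R-action; submodules are subsets of M. *)
From HB Require Import structures.
From mathcomp Require Import all_boot all_order all_algebra.
Set Implicit Arguments. Unset Strict Implicit. Unset Printing Implicit Defensive.
Import GRing.Theory.
Local Open Scope ring_scope.

Section ModuleNotions.
Variables (R : pzRingType) (T : Type) (z : T) (add : T -> T -> T)
          (act : T -> R -> T).

Definition is_submod (M N : T -> Prop) : Prop :=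
  (forall x, N x -> M x) /\ N z /\
  (forall x y, N x -> N y -> N (add x y)) /\
  (forall x r, N x -> N (act x r)).

Definition sum_sub (A B : T -> Prop) : T -> Prop :=
  fun x => exists a b, A a /\ B b /\ x = add a b.

Definition direct_summand (M A : T -> Prop) : Prop :=
  is_submod M A /\
  exists B, is_submod M B /\ (forall x, A x -> B x -> x = z) /\
            (forall x, M x -> sum_sub A B x).

Definition SSP (M : T -> Prop) : Prop :=
  forall A B, direct_summand M A -> direct_summand M B ->
              direct_summand M (sum_sub A B).
End ModuleNotions.

(* The free right R-module R_R^(N): finitely supported sequences nat -> R *)
Definition free_carrier (R : pzRingType) : (nat -> R) -> Prop :=
  fun f => exists N, forall n, (N <= n)%N -> f n = 0.
Definition free_zero (R : pzRingType) : nat -> R := fun _ => 0.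
Definition free_add (R : pzRingType) (f g : nat -> R) : nat -> R :=
  fun n => f n + g n.
Definition free_act (R : pzRingType) (f : nat -> R) (r : R) : nat -> R :=
  fun n => f n * r.

Definition free_SSP (R : pzRingType) : Prop :=
  SSP (@free_zero R) (@free_add R) (@free_act R) (@free_carrier R).

Definition semisimple_ring (R : pzRingType) : Prop :=
  forall I : R -> Prop,
    is_submod 0 +%R *%R (fun _ => True) I ->
    direct_summand 0 +%R *%R (fun _ => True) I.

From mathcomp Require Import all_boot all_order all_algebra.
From Stdlib Require Import FunctionalExtensionality ClassicalEpsilon Classical.

(* Over a semisimple ring every submodule [K] of [R^(N)] is a direct summand:
   the leading coefficients of the elements of [K] supported in [[0, n]] form a
   right ideal, and once a complement [J n] of each of these ideals is chosen,
   the sequences whose [n]-th entry lies in [J n] form a complement of [K].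
   Conversely, the SSP applied to the graph of [f |-> \sum_i x i * f i.+1] and
   to [{f | f 0 = 0}] shows that the right ideal generated by any sequence [x]
   is a direct summand of [R_R], hence of the form [eR] and so generated by
   finitely many [x i]. A right ideal that is not a summand contains no finitely
   generated ideal equal to it, so it contains a sequence [x] with each [x n]
   outside the span of its predecessors, which is absurd. *)

Set Implicit Arguments. Unset Strict Implicit. Unset Printing Implicit Defensive.
Import GRing.Theory.
Local Open Scope ring_scope.

Lemma direct_summand_ext (R : pzRingType) (T : Type) (z : T) (add : T -> T -> T)
    (act : T -> R -> T) (M A B : T -> Prop) :
  (forall x, A x <-> B x) ->
  direct_summand z add act M A -> direct_summand z add act M B.
Proof.
move=> AB [[AM [Az [Aadd Aact]]] [C [HC [disj cover]]]]; split.
  split; first by move=> x /AB /AM.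
  split; first exact/AB.
  split; first by move=> x y /AB Ax /AB Ay; apply/AB/Aadd.
  by move=> x r /AB Ax; apply/AB/Aact.
exists C; split=> //; split; first by move=> x /AB; apply: disj.
by move=> x /cover [a [c [Aa [Cc ->]]]]; exists a, c; split=> //; apply/AB.
Qed.

Section FreeModule.
Variable R : pzRingType.
Local Notation free := (@free_carrier R).
Local Notation fz := (@free_zero R).
Local Notation fadd := (@free_add R).
Local Notation fact := (@free_act R).
Local Notation submod S := (is_submod fz fadd fact free S).
Local Notation summand S := (direct_summand fz fadd fact free S).
Local Notation right_ideal I := (is_submod 0 +%R *%R (fun _ : R => True) I).
Local Notation ideal_summand I := (direct_summand 0 +%R *%R (fun _ : R => True) I).

Lemma free_zero_closed : free fz.
Proof. by exists 0%N. Qed.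

Lemma free_add_closed f g : free f -> free g -> free (fadd f g).
Proof.
move=> [M fM] [N gN]; exists (maxn M N) => n; rewrite geq_max => /andP[Mn Nn].
by rewrite /free_add fM ?gN ?addr0.
Qed.

Lemma free_act_closed f r : free f -> free (fact f r).
Proof. by move=> [N fN]; exists N => n Nn; rewrite /free_act fN ?mul0r. Qed.

Lemma free_sub_closed f g : free f -> free g -> free (fun n => f n - g n).
Proof.
move=> Ff Fg; have -> : (fun n => f n - g n) = fadd f (fact g (-1)).
  by apply: functional_extensionality => n; rewrite /free_add /free_act mulrN1.
by apply: free_add_closed => //; apply: free_act_closed.
Qed.

Definition delta (n : nat) (t : R) : nat -> R := fun m => if m == n then t else 0.

Lemma free_delta n t : free (delta n t).
Proof. by exists n.+1 => m nm; rewrite /delta gtn_eqF. Qed.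

Lemma sum_sub_submod A B : submod A -> submod B -> submod (sum_sub fadd A B).
Proof.
move=> [AF [A0 [Aadd Aact]]] [BF [B0 [Badd Bact]]]; split.
  by move=> _ [a [b [Aa [Bb ->]]]]; apply: free_add_closed; auto.
split.
  exists fz, fz; do 2!split=> //.
  by apply: functional_extensionality => n; rewrite /free_add /free_zero addr0.
split.
  move=> _ _ [a [b [Aa [Bb ->]]]] [a' [b' [Aa' [Bb' ->]]]].
  exists (fadd a a'), (fadd b b'); split; [auto | split; [auto |]].
  by apply: functional_extensionality => n; rewrite /free_add addrACA.
move=> _ r [a [b [Aa [Bb ->]]]]; exists (fact a r), (fact b r).
split; [auto | split; [auto |]].
by apply: functional_extensionality => n; rewrite /free_add /free_act mulrDl.
Qed.

Section LeadingIdeals.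
Variable K : (nat -> R) -> Prop.
Hypothesis K_submod : submod K.

Definition lead_ideal (n : nat) : R -> Prop :=
  fun t => exists k, K k /\ (forall m, (n < m)%N -> k m = 0) /\ t = k n.

Lemma lead_ideal_submod n : right_ideal (lead_ideal n).
Proof.
case: K_submod => [_ [K0 [Kadd Kact]]]; split=> //; split.
  by exists fz; split; [|split].
split.
  move=> _ _ [k [Kk [kn ->]]] [l [Kl [ln ->]]]; exists (fadd k l).
  split; [exact: Kadd | split=> // m nm]; by rewrite /free_add kn ?ln ?addr0.
move=> _ r [k [Kk [kn ->]]]; exists (fact k r).
split; [exact: Kact | split=> // m nm]; by rewrite /free_act kn ?mul0r.
Qed.

Section LeadComplement.
Variable J : nat -> R -> Prop.
Hypothesis J_submod : forall n, right_ideal (J n).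
Hypothesis lead_J_disjoint : forall n t, lead_ideal n t -> J n t -> t = 0.
Hypothesis lead_J_cover : forall n t, sum_sub +%R (lead_ideal n) (J n) t.

Definition lead_complement (f : nat -> R) : Prop := free f /\ forall n, J n (f n).

Lemma lead_complement_submod : submod lead_complement.
Proof.
split; first by move=> f [].
split; first by split=> [|n]; [exact: free_zero_closed | case: (J_submod n) => _ []].
split.
  move=> f g [Ff Jf] [Fg Jg]; split=> [|n]; first exact: free_add_closed.
  by case: (J_submod n) => _ [_ [Jadd _]]; apply: Jadd.
move=> f r [Ff Jf]; split=> [|n]; first exact: free_act_closed.
by case: (J_submod n) => _ [_ [_ Jact]]; apply: Jact.
Qed.

(* Induction on the support: the last coordinate of [f] lies both in the
   leading ideal and in its complement. *)
Lemma lead_complement_disjoint f : K f -> lead_complement f -> f = fz.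
Proof.
move=> Kf [[N fN] Jf]; apply: functional_extensionality => m.
elim: N f Kf Jf fN => [|N IH] f Kf Jf fN; first exact: fN.
apply: (IH f) => // n; rewrite leq_eqVlt => /predU1P[<- | Nn]; last exact: fN.
by apply: lead_J_disjoint (Jf N); exists f; split=> //; split=> //.
Qed.

(* Write [1 = e + d] with [e] the leading coefficient of some [k] in [K] and
   [d] in [J N]; subtracting [k * f N] and [delta N (d * f N)] from [f]
   kills its last coordinate. *)
Lemma lead_complement_cover f : free f -> sum_sub fadd K lead_complement f.
Proof.
case: K_submod => [_ [K0 [Kadd Kact]]] [N]; elim: N f => [|N IH] f fN.
  exists fz, fz; split=> //; split; first by case: lead_complement_submod => _ [].
  by apply: functional_extensionality => n; rewrite /free_add /free_zero fN ?addr0.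
have [e [d [[k [Kk [kN ->]]] [Jd Ed]]]] := lead_J_cover N 1.
pose c := delta N (d * f N).
have [a [b [Ka [[Fb Jb] Ey]]]] :
    sum_sub fadd K lead_complement (fun m => f m - k m * f N - c m).
  apply: IH => m; rewrite leq_eqVlt => /predU1P[<- | Nm].
    by rewrite /c /delta eqxx -addrA -opprD -mulrDl -Ed mul1r subrr.
  by rewrite /c /delta fN // kN // gtn_eqF // mul0r !subr0.
exists (fadd a (fact k (f N))), (fadd b c).
split; first by apply: Kadd => //; apply: Kact.
split.
  split=> [|n]; first by apply: free_add_closed => //; apply: free_delta.
  case: (J_submod n) => _ [J0 [Jadd _]]; apply: Jadd => //.
  rewrite /c /delta; case: eqP => [-> | _] //.
  by case: (J_submod N) => _ [_ [_ Jact]]; apply: Jact.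
apply: functional_extensionality => m.
have := congr1 (fun g => g m) Ey; rewrite /free_add /free_act addrACA => <-.
by rewrite -[f m - _ - _]addrA -opprD addrNK.
Qed.

End LeadComplement.
End LeadingIdeals.

Lemma semisimple_free_summand :
  semisimple_ring R -> forall K, submod K -> summand K.
Proof.
move=> R_ss K K_submod; split=> //.
have [J HJ] := choice _ (fun n => (R_ss _ (lead_ideal_submod K_submod n)).2).
have J_submod n := (HJ n).1.
exists (lead_complement J); split; first exact: lead_complement_submod.
split; first exact: (lead_complement_disjoint (fun n => (HJ n).2.1)).
exact: (lead_complement_cover K_submod J_submod (fun n t => (HJ n).2.2 t I)).
Qed.

Lemma semisimple_free_SSP : semisimple_ring R -> free_SSP R.
Proof.
move=> R_ss A B [A_submod _] [B_submod _].
by apply: semisimple_free_summand => //; apply: sum_sub_submod.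
Qed.

Definition span (x : nat -> R) : R -> Prop :=
  fun t => exists N (r : nat -> R), t = \sum_(i < N) x i * r i.

Lemma span_sum_widen (x r : nat -> R) M N : (M <= N)%N ->
  \sum_(i < M) x i * r i = \sum_(i < N) x i * (if (i < M)%N then r i else 0).
Proof.
move=> MN; rewrite (big_ord_widen _ (fun i => x i * r i) MN) big_mkcond.
by apply: eq_bigr => i _; case: ifP; rewrite ?mulr0.
Qed.

Lemma span_submod x : right_ideal (span x).
Proof.
split=> //; split; first by exists 0%N, (fun _ => 0); rewrite big_ord0.
split.
  move=> _ _ [M [r ->]] [N [s ->]].
  exists (maxn M N), (fun i => (if (i < M)%N then r i else 0)
                              + (if (i < N)%N then s i else 0)).
  rewrite (span_sum_widen x r (leq_maxl M N)) (span_sum_widen x s (leq_maxr M N)).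
  by rewrite -big_split; apply: eq_bigr => i _; rewrite mulrDr.
move=> _ s [N [r ->]]; exists N, (fun i => r i * s).
by rewrite mulr_suml; apply: eq_bigr => i _; rewrite mulrA.
Qed.

Lemma span_in x j : span x (x j).
Proof.
exists j.+1, (fun i => if i == j then 1 else 0).
rewrite big_ord_recr /= eqxx mulr1 big1 ?add0r // => i _.
by rewrite (ltn_eqF (ltn_ord i)) mulr0.
Qed.

Lemma span_sub I x : right_ideal I -> (forall i, I (x i)) -> forall t, span x t -> I t.
Proof.
move=> [_ [I0 [Iadd Iact]]] xI _ [N [r ->]].
elim: N => [|N IH]; first by rewrite big_ord0.
by rewrite big_ord_recr /=; apply: Iadd => //; apply: Iact.
Qed.

(* With [1 = e + k] along [A (+) K], [k * y = y - e * y] lies in [A] and in [K]. *)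
Lemma summand_left_unit A :
  ideal_summand A -> exists2 e, A e & forall y, A y -> e * y = y.
Proof.
move=> [[_ [_ [Aadd Aact]]] [K [[_ [_ [_ Kact]]] [disj cover]]]].
have [e [k [Ae [Kk E1]]]] := cover 1 I; exists e => // y Ay.
have ky0 : k * y = 0.
  apply: disj; last exact: Kact.
  have -> : k * y = y + e * y * -1.
    by apply/eqP; rewrite mulrN1 eq_sym subr_eq -mulrDl addrC -E1 mul1r.
  by apply: Aadd => //; apply: (Aact _ _ (Aact _ _ Ae)).
by rewrite -[RHS]mul1r E1 mulrDl ky0 addr0.
Qed.

Lemma span_summand_stationary x :
  ideal_summand (span x) -> exists M, span (nth 0 (mkseq x M)) (x M).
Proof.
case/summand_left_unit => _ [M [r ->]] unit; exists M, M, (fun i => r i * x M).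
rewrite -{1}(unit _ (span_in x M)) mulr_suml.
by apply: eq_bigr => i _; rewrite nth_mkseq // mulrA.
Qed.

Definition head_only (f : nat -> R) : Prop := free f /\ forall n, f n.+1 = 0.

(* Graph of the map [(f 1, f 2, ...) |-> \sum_i x i * f i.+1], stored in
   coordinate [0]. *)
Definition tail_graph (x : nat -> R) (f : nat -> R) : Prop :=
  free f /\ exists N, (forall n, (N <= n)%N -> f n.+1 = 0) /\
                      f 0%N = \sum_(i < N) x i * f i.+1.

Lemma tail_sum_widen (x f : nat -> R) M N :
  (forall n, (M <= n)%N -> f n.+1 = 0) -> (M <= N)%N ->
  \sum_(i < N) x i * f i.+1 = \sum_(i < M) x i * f i.+1.
Proof.
move=> fM MN; rewrite (big_ord_widen _ (fun i => x i * f i.+1) MN) [RHS]big_mkcond.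
apply: eq_bigr => i _; case: ifPn => // /negbTE.
by rewrite ltnNge => /negbFE/fM ->; rewrite mulr0.
Qed.

Lemma head_only_submod : submod head_only.
Proof.
split; first by move=> f [].
split; first by split; first exact: free_zero_closed.
split.
  move=> f g [Ff f0] [Fg g0]; split=> [|n]; first exact: free_add_closed.
  by rewrite /free_add f0 g0 addr0.
move=> f r [Ff f0]; split=> [|n]; first exact: free_act_closed.
by rewrite /free_act f0 mul0r.
Qed.

Lemma tail_graph_submod x : submod (tail_graph x).
Proof.
split; first by move=> f [].
split; first by split; [exact: free_zero_closed | exists 0%N; rewrite big_ord0].
split.
  move=> f g [Ff [M [fM Ef]]] [Fg [N [gN Eg]]]; split; first exact: free_add_closed.
  exists (maxn M N); split.
    by move=> n; rewrite geq_max => /andP[Mn Nn]; rewrite /free_add fM ?gN ?addr0.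
  rewrite /free_add Ef Eg -(tail_sum_widen x fM (leq_maxl M N)).
  rewrite -(tail_sum_widen x gN (leq_maxr M N)) -big_split.
  by apply: eq_bigr => i _; rewrite mulrDr.
move=> f r [Ff [N [fN Ef]]]; split; first exact: free_act_closed.
exists N; split; first by move=> n Nn; rewrite /free_act fN ?mul0r.
by rewrite /free_act Ef mulr_suml; apply: eq_bigr => i _; rewrite mulrA.
Qed.

Lemma tail_graph_summand x : summand (tail_graph x).
Proof.
split; first exact: tail_graph_submod.
exists head_only; split; first exact: head_only_submod.
split.
  move=> f [_ [N [_ Ef]]] [_ f0]; apply: functional_extensionality => -[|n] //.
  by rewrite Ef big1 // => i _; rewrite f0 mulr0.
move=> f [N fN]; pose s := \sum_(i < N) x i * f i.+1.
exists (fun n => if n is 0%N then s else f n), (delta 0 (f 0%N - s)); split.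
  split; first by exists N.+1 => -[|n] // /ltnW; apply: fN.
  by exists N; split => // n /leqW; apply: fN.
split; first by split=> [|n]; [exact: free_delta | rewrite /delta].
apply: functional_extensionality => -[|n]; rewrite /free_add /delta /= ?addr0 //.
by rewrite addrC subrK.
Qed.

Lemma tail_graph0E f : tail_graph (fun _ => 0) f <-> free f /\ f 0%N = 0.
Proof.
split=> [[Ff [N [_ ->]]] | [[N fN] f0]]; first by rewrite big1 // => i _; rewrite mul0r.
split; first by exists N.
exists N; split=> [n /leqW | ]; first exact: fN.
by rewrite f0 big1 // => i _; rewrite mul0r.
Qed.

Lemma sum_tail_graphsE x f :
  sum_sub fadd (tail_graph x) (tail_graph (fun _ => 0)) f <-> free f /\ span x (f 0%N).
Proof.
split.
  move=> [a [b [[Fa [N [_ Ea]]] [/tail_graph0E[Fb b0] ->]]]].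
  split; first exact: free_add_closed.
  by exists N, (fun i => a i.+1); rewrite /free_add b0 addr0.
move=> [Ff [N [r Er]]].
pose a n := if n is m.+1 then (if (m < N)%N then r m else 0) else f 0%N.
have Ga : tail_graph x a.
  split; first by exists N.+1 => -[|n] //=; rewrite ltnS ltnNge => ->.
  exists N; split; first by move=> n /=; rewrite ltnNge => ->.
  by rewrite /= Er; apply: eq_bigr => i _; rewrite ltn_ord.
exists a, (fun n => f n - a n); split=> //; split.
  by apply/tail_graph0E; split; [apply: free_sub_closed; case: Ga | rewrite subrr].
by apply: functional_extensionality => n; rewrite /free_add addrC subrK.
Qed.

Lemma coord0_summand I :
  right_ideal I -> summand (fun f => free f /\ I (f 0%N)) -> ideal_summand I.
Proof.
move=> I_ideal [_ [D [[DF [D0 [Dadd Dact]]] [disj cover]]]]; split=> //.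
exists (fun t => exists d, D d /\ t = d 0%N); split.
  split=> //; split; first by exists fz.
  split; first by move=> _ _ [d [Dd ->]] [d' [Dd' ->]]; exists (fadd d d'); split; auto.
  by move=> _ r [d [Dd ->]]; exists (fact d r); split; auto.
split.
  move=> t It [d [Dd Et]]; rewrite Et (disj d) //.
  by split; [apply: DF | rewrite -Et].
move=> t _; have [s [d [[_ Is] [Dd Et]]]] := cover _ (free_delta 0 t).
exists (s 0%N), (d 0%N); split=> //; split; first by exists d.
by have := congr1 (fun g => g 0%N) Et.
Qed.

Lemma free_SSP_span_summand x : free_SSP R -> ideal_summand (span x).
Proof.
move=> R_SSP; apply: coord0_summand; first exact: span_submod.
apply: direct_summand_ext (sum_tail_graphsE x) _.
by apply: R_SSP; apply: tail_graph_summand.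
Qed.

Lemma free_SSP_semisimple : free_SSP R -> semisimple_ring R.
Proof.
move=> R_SSP I I_ideal; apply: NNPP => I_not_summand.
have grow (s : seq R) :
    exists y, (forall i, I (nth 0 s i)) -> I y /\ ~ span (nth 0 s) y.
  case: (classic (forall i, I (nth 0 s i))) => [sI | not_sI]; last by exists 0.
  apply: NNPP => no_y; apply: I_not_summand.
  apply: direct_summand_ext (free_SSP_span_summand _ R_SSP) => t.
  split; first exact: span_sub.
  by move=> It; apply: NNPP => t_out; apply: no_y; exists t.
have [g Hg] := choice _ grow.
pose x n := g (iter n (fun s => rcons s (g s)) [::]).
have xE n : x n = g (mkseq x n).
  suff -> : mkseq x n = iter n (fun s => rcons s (g s)) [::] by rewrite /x.
  by elim: n => [|n IH] //; rewrite mkseqS IH.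
have prefixI n : (forall i, (i < n)%N -> I (x i)) -> forall i, I (nth 0 (mkseq x n) i).
  move=> xI i; case: (ltnP i n) => [lt_in | le_ni].
    by rewrite nth_mkseq //; apply: xI.
  by rewrite nth_default ?size_mkseq //; case: I_ideal => _ [].
have xI n : I (x n).
  by elim/ltn_ind: n => n IH; rewrite xE; apply: (Hg _ (prefixI n IH)).1.
have [M xM] := span_summand_stationary (free_SSP_span_summand x R_SSP).
by apply: (Hg _ (prefixI M (fun i _ => xI i))).2; rewrite -xE.
Qed.

End FreeModule.

Theorem corollary2p18 (R : pzRingType) : semisimple_ring R <-> free_SSP R.
Proof. by split; [exact: semisimple_free_SSP | exact: free_SSP_semisimple]. Qed.
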